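(* Let $(M,d)$ be a pointed metric space. The space $\mathrm{Lip}_0(M)$ has the $w^*$-LD2P if and only if $M$ has the 2-Lip-LTP.
   Context: $M$ has base point $0$; $\mathrm{Lip}_0(M)$ is the real Banach space of Lipschitz $f\colon M\to\mathbb R$ with $f(0)=0$, normed by the best Lipschitz constant, with unit ball $B_{\mathrm{Lip}_0(M)}$; it is the dual of the Lipschitz-free space $\mathcal F(M)$ (norm-closed span of the point evaluations $\delta_x$ in $\mathrm{Lip}_0(M)^*$). $\mathrm{Lip}_0(M)$ has the $w^*$-LD2P if every $w^*$-slice $\{f\in B_{\mathrm{Lip}_0(M)}: \mu(f)>1-\alpha\}$, $\mu\in\mathcal F(M)$, $\|\mu\|=1$, $\alpha>0$, has diameter $2$. $\widetilde M=\{(x,y)\in M\times M:x\ne y\}$, $f(m_{x,y})=(f(x)-f(y))/d(x,y)$, $\pi(A)=\{x\in M:\exists y,\ (x,y)\in A\text{ or }(y,x)\in A\}$. $A\subseteq\widetilde M$ is cyclically monotonic if for every finite sequence $(x_1,y_1),\dots,(x_n,y_n)\in A$, with $y_{n+1}=y_1$, $\sum_i d(x_i,y_{i+1})\ge\sum_i d(x_i,y_i)$. $M$ has the 2-Lip-LTP if for every finite cyclically monotonic $A\subseteq\widetilde M$ and every $\varepsilon>0$ there exist $f,g\in B_{\mathrm{Lip}_0(M)}$ and $u,v\in M$ with $u\ne v$ such that $f(m_{x,y})\ge1-\varepsilon$ and $g(m_{x,y})\ge1-\varepsilon$ for all $(x,y)\in A$, and $\max\{f(x)-f(y),g(y)-g(x)\}+(1-\varepsilon)d(u,v)\le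 d(x,u)+d(y,v)$ for all $x,y\in\pi(A)$. *)

From HB Require Import structures.
From mathcomp Require Import all_boot all_order all_algebra.
From mathcomp Require Import boolp classical_sets cardinality reals constructive_ereal ereal.
From Stdlib Require Lists.List.
Set Implicit Arguments. Unset Strict Implicit. Unset Printing Implicit Defensive.
Import Order.TTheory GRing.Theory Num.Theory.
Local Open Scope ring_scope.
Local Open Scope classical_set_scope.

Section Defs.
Variable R : realType.
Variable M : Type.
Variable d : M -> M -> R.

Definition is_metric : Prop :=
  (forall x y, 0 <= d x y) /\ (forall x y, d x y = 0 <-> x = y) /\
  (forall x y, d x y = d y x) /\ (forall x y z, d x z <= d x y + d y z).

(* best Lipschitz constant (+oo if not Lipschitz) *)
Definition lipnorm (f : M -> R) : \bar R :=
  ereal_sup [set r | exists x y : M, x <> y /\ r = (`|f x - f y| / d x y)%:E].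

Definition lip0 (x0 : M) (f : M -> R) : Prop :=
  f x0 = 0 /\ (lipnorm f < +oo)%E.

Definition lipball (x0 : M) : set (M -> R) :=
  [set f | lip0 x0 f /\ (lipnorm f <= 1%:E)%E].

(* finite linear combination  sum_i a_i delta_{x_i}  acting on f *)
Definition eval_comb (c : seq (R * M)) (f : M -> R) : R :=
  \sum_(p <- c) p.1 * f p.2.

Definition dualnorm (x0 : M) (phi : (M -> R) -> R) : \bar R :=
  ereal_sup [set (`|phi f|)%:E | f in lipball x0].

(* phi is (the action on Lip_0(M) of) an element of the Lipschitz-free space F(M):
   a linear functional on Lip_0(M) lying in the norm-closed span of the point
   evaluations in Lip_0(M)^* *)
Definition in_free (x0 : M) (phi : (M -> R) -> R) : Prop :=
  (forall (a : R) (f g : M -> R), lip0 x0 f -> lip0 x0 g ->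
     phi (fun x => a * f x + g x) = a * phi f + phi g) /\
  (forall e : R, 0 < e -> exists c : seq (R * M),
     (dualnorm x0 (fun f => (phi f - eval_comb c f)%R) <= e%:E)%E).

Definition wslice (x0 : M) (phi : (M -> R) -> R) (alpha : R) : set (M -> R) :=
  [set f | lipball x0 f /\ 1 - alpha < phi f].

Definition lipdiam (S : set (M -> R)) : \bar R :=
  ereal_sup [set r | exists f g, S f /\ S g /\ r = lipnorm (fun x => f x - g x)].

Definition wLD2P (x0 : M) : Prop :=
  forall phi : (M -> R) -> R, in_free x0 phi -> dualnorm x0 phi = 1%:E ->
  forall alpha : R, 0 < alpha -> lipdiam (wslice x0 phi alpha) = 2%:E.

(* f(m_{x,y}) *)
Definition mol (f : M -> R) (x y : M) : R := (f x - f y) / d x y.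

Definition seq_in (A : set (M * M)) (s : seq (M * M)) : Prop :=
  forall p, Stdlib.Lists.List.In p s -> A p.

Definition cyc_monotonic (A : set (M * M)) : Prop :=
  forall s : seq (M * M), seq_in A s ->
    \sum_(p <- zip (map fst s) (rot 1 (map snd s))) d p.1 p.2 >=
    \sum_(p <- s) d p.1 p.2.

Definition proj_pairs (A : set (M * M)) : set M :=
  [set x | exists y, A (x, y) \/ A (y, x)].

Definition two_LipLTP (x0 : M) : Prop :=
  forall A : set (M * M), finite_set A -> (forall x y, A (x, y) -> x <> y) ->
  cyc_monotonic A ->
  forall eps : R, 0 < eps ->
  exists f g : M -> R, lipball x0 f /\ lipball x0 g /\
  exists u v : M, u <> v /\
    (forall x y, A (x, y) -> 1 - eps <= mol f x y /\ 1 - eps <= mol g x y) /\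
    (forall x y, proj_pairs A x -> proj_pairs A y ->
       Num.max (f x - f y) (g y - g x) + (1 - eps) * d u v <= d x u + d y v).

End Defs.

From HB Require Import structures.
From mathcomp Require Import all_boot all_order all_algebra.
From mathcomp Require Import boolp classical_sets cardinality reals constructive_ereal ereal.
From mathcomp Require Import topology normedtype derive.
From mathcomp Require Import ring lra.
Import Order.TTheory GRing.Theory Num.Theory.
Import numFieldNormedType.Exports.
Set Implicit Arguments. Unset Strict Implicit. Unset Printing Implicit Defensive.
Local Open Scope ring_scope.
Local Open Scope classical_set_scope.

(** Both directions reduce to finite combinations [mu] of point evaluations,
  which approximate every element of F(M).

  (=>) For a finite cyclically monotonic set A, Rockafellar's construction gives
  a 1-Lipschitz potential that is tight on A, so the average [mu] of the
  molecules m_{x,y}, (x,y) in A, has norm one.  The slice of width eps/|A| at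
  [mu] forces f(m_{x,y}) >= 1 - eps on A, and two elements of it at distance
  almost 2 are almost opposite along some pair (u,v); the triangle inequality
  turns this into the inequality of the 2-Lip-LTP.

  (<=) Let K maximise [mu] over the functions that are 1-Lipschitz on its
  finite support.  The tight pairs of K form a finite cyclically monotonic set
  A, and any f in the ball with f(m_{x,y}) >= 1 - eps on A has
  mu(f) >= (1 - eps) mu(K): otherwise K tilted slightly away from f would beat
  K.  So the f, g given by the 2-Lip-LTP lie in the slice, and their
  inequality is exactly what is needed to extend them (McShane, then Whitney)
  so that f - g grows by almost 2 d(u,v) from u to v. *)

Section RealFacts.
Variable R : realType.

Lemma sumr_le_mem (T : eqType) (s : seq T) (F : T -> R) p : p \in s ->
  (forall q, q \in s -> F q <= 0) -> \sum_(q <- s) F q <= F p.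
Proof.
move=> ps F_le0; rewrite (perm_big _ (perm_to_rem ps)) big_cons gerDl.
by rewrite big_seq sumr_le0 // => q /mem_rem; exact: F_le0.
Qed.

Lemma sumr1_size (T : Type) (s : seq T) : \sum_(q <- s) (1 : R) = (size s)%:R.
Proof. by rewrite big_const_seq count_predT iter_addr_0. Qed.

Lemma eq_big_In (T : Type) (s : seq T) (F G : T -> R) :
  (forall q, List.In q s -> F q = G q) -> \sum_(q <- s) F q = \sum_(q <- s) G q.
Proof.
elim: s => [|a s IH] FG; first by rewrite !big_nil.
by rewrite !big_cons FG /=; [rewrite IH // => q qs; apply: FG; right | left].
Qed.

Lemma sumr_rot (T : Type) n (s : seq T) (F : T -> R) :
  \sum_(x <- rot n s) F x = \sum_(x <- s) F x.
Proof. by rewrite /rot big_cat /= addrC -big_cat cat_take_drop. Qed.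

Lemma sumr_zip_sub (T : Type) (s t : seq T) (h : T -> R) : size s = size t ->
  \sum_(p <- zip s t) (h p.1 - h p.2) = \sum_(x <- s) h x - \sum_(y <- t) h y.
Proof.
elim: s t => [|a s IH] [|b t] //=; first by rewrite !big_nil subrr.
by move=> [st]; rewrite !big_cons IH // addrACA opprD.
Qed.

Lemma exists_pos_lbound (I : finType) (P : I -> Prop) (g : I -> R) :
  (forall i, P i -> 0 < g i) -> exists t, 0 < t /\ forall i, P i -> t <= g i.
Proof.
move=> g_gt0.
suff [t [t_gt0 t_le]] : exists t, 0 < t /\ forall i, i \in enum I -> P i -> t <= g i.
  by exists t; split=> // i; apply: t_le; rewrite mem_enum.
elim: (enum I) => [|a s [t [t_gt0 t_le]]]; first by exists 1.
have [Pa|nPa] := pselect (P a).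
  exists (Num.min t (g a)); split; first by rewrite lt_min t_gt0 g_gt0.
  move=> i; rewrite in_cons => /orP[/eqP ->|i_s] Pi; first by rewrite ge_min lexx orbT.
  by rewrite ge_min t_le.
by exists t; split=> // i; rewrite in_cons => /orP[/eqP ->|i_s] Pi //; exact: t_le.
Qed.

(* Along a pair of points with distance [D], [X] and [Y] are the increments of
   a 1-Lipschitz maximiser K and of a competitor f: either the pair is tight
   for K and f almost tight, or [t] is small compared with the slack [D - X]. *)
Lemma tilt_le (e t X Y D : R) : 0 <= e -> 0 < t -> 0 <= D -> X <= D -> - D <= Y ->
  (X = D /\ (1 - e) * D <= Y) \/ t * (2 * D + 1) <= D - X ->
  (1 + t) * X - t * Y <= (1 + t * e) * D.
Proof.
move=> e_ge0 t_gt0 D_ge0 XD YD [[-> YD']|small].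
  have : t * ((1 - e) * D) <= t * Y by rewrite ler_pM2l.
  by have := mulr_ge0 (mulr_ge0 (ltW t_gt0) e_ge0) D_ge0; nra.
have : t * (X + D) <= t * (2 * D) by rewrite ler_pM2l //; lra.
by have := mulr_ge0 (mulr_ge0 (ltW t_gt0) e_ge0) D_ge0; nra.
Qed.

Lemma continuous_lin_comb m (L : 'I_m -> R) (r : seq 'I_m) :
  continuous (fun v : 'rV[R]_m => \sum_(i <- r) L i * v ord0 i).
Proof.
elim: r => [|a r IH] v.
  under [fun _ => _]funext do rewrite big_nil; exact: cst_continuous.
under [fun _ => _]funext do rewrite big_cons.
apply: continuousD (IH v); apply: continuousM; first exact: cst_continuous.
exact: coord_continuous.
Qed.

Definition lip_polytope m (D : 'I_m.+1 -> 'I_m.+1 -> R) : set 'rV[R]_m.+1 :=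
  [set v | v ord0 ord0 = 0 /\ forall i j, v ord0 i - v ord0 j <= D i j].

Lemma lip_polytope_closed m (D : 'I_m.+1 -> 'I_m.+1 -> R) : closed (lip_polytope D).
Proof.
have -> : lip_polytope D = [set v : 'rV[R]_m.+1 | v ord0 ord0 = 0] `&`
    \bigcap_(ij in [set: 'I_m.+1 * 'I_m.+1])
      [set v : 'rV[R]_m.+1 | v ord0 ij.1 - v ord0 ij.2 <= D ij.1 ij.2].
  apply/seteqP; split=> v /= [v0 vD]; split=> //; first by move=> [i j] _; exact: vD.
  by move=> i j; exact: (vD (i, j)).
apply: closedI.
  apply: (@preimage_closed _ _ (fun v : 'rV[R]_m.+1 => v ord0 ord0) [set x | x = 0]).
    by move=> x _; exact: coord_continuous.
  exact: closed_eq.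
apply: closed_bigI => -[i j] _.
apply: (@preimage_closed _ _ (fun v : 'rV[R]_m.+1 => v ord0 i - v ord0 j) [set x | x <= D i j]).
  by move=> x _; apply: continuousB; exact: coord_continuous.
exact: closed_le.
Qed.

(* Pinning [v 0] to [0] confines [v i] to [[- D 0 i, D i 0]]. *)
Lemma lip_polytope_compact m (D : 'I_m.+1 -> 'I_m.+1 -> R) : compact (lip_polytope D).
Proof.
have box_compact : compact [set v : 'rV[R]_m.+1 |
    forall i, `[- D ord0 i, D i ord0]%classic (v ord0 i)].
  apply: (@rV_compact _ _ (fun i => `[- D ord0 i, D i ord0]%classic)) => i.
  exact: segment_compact.
apply: (subclosed_compact (lip_polytope_closed (D := D)) box_compact).
move=> v [v0 vD] i /=; rewrite in_itv /=.
by have := vD i ord0; have := vD ord0 i; rewrite v0 sub0r subr0 lerNl => -> ->.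
Qed.

Lemma lip_polytope_max m (D : 'I_m.+1 -> 'I_m.+1 -> R) (L : 'I_m.+1 -> R) :
  (forall i j, 0 <= D i j) ->
  exists k : 'I_m.+1 -> R, [/\ k ord0 = 0, forall i j, k i - k j <= D i j &
    forall k' : 'I_m.+1 -> R, k' ord0 = 0 -> (forall i j, k' i - k' j <= D i j) ->
      \sum_i L i * k' i <= \sum_i L i * k i].
Proof.
move=> D_ge0.
have D_neq0 : lip_polytope D !=set0 by exists 0; split=> [|i j]; rewrite !mxE ?subrr.
have [c cD c_max] := EVT_max_rV D_neq0 (lip_polytope_compact (D := D))
  (continuous_subspaceT (continuous_lin_comb (L := L) (r := index_enum _))).
move: cD; rewrite inE => -[c0 cD].
exists (fun i => c ord0 i); split=> // k' k'0 k'D.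
have := c_max (\row_i k' i); rewrite !inE; under eq_bigr do rewrite mxE.
by apply; split=> [|i j]; rewrite !mxE.
Qed.

End RealFacts.

Section LipschitzFree.
Variables (R : realType) (M : Type) (d : M -> M -> R) (x0 : M).
Hypothesis hd : is_metric d.

Lemma dist_ge0 x y : 0 <= d x y. Proof. exact: hd.1. Qed.
Lemma dist_xx x : d x x = 0. Proof. exact/(hd.2.1 x x).2. Qed.
Lemma distC x y : d x y = d y x. Proof. exact: hd.2.2.1. Qed.
Lemma dist_triangle x y z : d x z <= d x y + d y z. Proof. exact: hd.2.2.2. Qed.

Lemma dist_gt0 x y : x <> y -> 0 < d x y.
Proof. by move=> xy; rewrite lt_def dist_ge0 andbT; apply/eqP => /(hd.2.1 x y). Qed.

Definition lip1 (f : M -> R) := forall x y, f x - f y <= d x y.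

Lemma lip1_norm f : lip1 f -> forall x y, `|f x - f y| <= d x y.
Proof. by move=> f_lip1 x y; rewrite ler_norml f_lip1 andbT lerNl opprB distC. Qed.

Lemma lipnorm_ge f x y : x <> y -> ((`|f x - f y| / d x y)%:E <= lipnorm d f)%E.
Proof. by move=> xy; apply: ereal_sup_ubound; exists x, y. Qed.

Lemma lipball_lip1 f : lipball d x0 f -> lip1 f.
Proof.
move=> [_ f_le1] x y; have [->|xy] := pselect (x = y); first by rewrite subrr dist_xx.
have := le_trans (lipnorm_ge f xy) f_le1.
rewrite lee_fin ler_pdivrMr ?dist_gt0 // mul1r; exact: le_trans (ler_norm _).
Qed.

Lemma lip1_lipnorm f : lip1 f -> (lipnorm d f <= 1%:E)%E.
Proof.
move=> f_lip1; apply: ge_ereal_sup => _ [x [y [xy ->]]].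
by rewrite lee_fin ler_pdivrMr ?dist_gt0 // mul1r lip1_norm.
Qed.

Lemma lip1_lipball f : f x0 = 0 -> lip1 f -> lipball d x0 f.
Proof.
move=> f0 f_lip1; have f_le1 := lip1_lipnorm f_lip1.
by split=> //; split=> //; exact: le_lt_trans f_le1 (ltry _).
Qed.

Lemma lip1_lipball_shift f : lip1 f -> lipball d x0 (fun x => f x - f x0).
Proof.
move=> f_lip1; apply: lip1_lipball; first by rewrite subrr.
by move=> x y; rewrite opprB addrA subrK.
Qed.

Lemma lipball0 : lipball d x0 (fun=> 0).
Proof. by apply: lip1_lipball => // x y; rewrite subrr dist_ge0. Qed.

Lemma lipballN f : lipball d x0 f -> lipball d x0 (fun x => - f x).
Proof.
move=> f_ball; have f_lip1 := lipball_lip1 f_ball.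
apply: lip1_lipball; first by rewrite f_ball.1.1 oppr0.
by move=> x y; rewrite opprK addrC distC.
Qed.

Lemma mol_shift f x y : mol d (fun z => f z - f x0) x y = mol d f x y.
Proof. by rewrite /mol opprB addrA subrK. Qed.

Lemma mol_le1 f x y : lipball d x0 f -> x <> y -> mol d f x y <= 1.
Proof.
by move=> /lipball_lip1 f_lip1 xy; rewrite /mol ler_pdivrMr ?dist_gt0 // mul1r.
Qed.

Lemma dualnorm_ge phi f : lipball d x0 f -> ((`|phi f|)%:E <= dualnorm d x0 phi)%E.
Proof. by move=> f_ball; apply: ereal_sup_ubound; exists f. Qed.

Lemma lipdiam_le2 (S : set (M -> R)) : S `<=` lipball d x0 -> (lipdiam d S <= 2%:E)%E.
Proof.
move=> S_ball; apply: ge_ereal_sup => _ [F [G [SF [SG ->]]]].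
apply: ge_ereal_sup => _ [x [y [xy ->]]].
have F_norm := lip1_norm (lipball_lip1 (S_ball _ SF)) x y.
have G_norm := lip1_norm (lipball_lip1 (S_ball _ SG)) x y.
rewrite lee_fin ler_pdivrMr ?dist_gt0 //.
have -> : F x - G x - (F y - G y) = (F x - F y) - (G x - G y) by ring.
by apply: le_trans (ler_normB _ _) _; lra.
Qed.

Lemma lipdiam_gt (S : set (M -> R)) (r : R) : (r%:E < lipdiam d S)%E ->
  exists F G u v, [/\ S F, S G, u <> v & r * d u v < (F v - G v) - (F u - G u)].
Proof.
move=> /ereal_sup_gt[_ [F [G [SF [SG ->]]]]] /ereal_sup_gt[_ [x [y [xy ->]]]].
rewrite lte_fin ltr_pdivlMr ?dist_gt0 //.
have [FGxy|FGxy] := lerP 0 (F x - G x - (F y - G y)).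
  by rewrite ger0_norm // => ?; exists F, G, y, x; split=> //; [move=> /esym /xy | rewrite distC].
by rewrite ltr0_norm // opprB => ?; exists F, G, x, y.
Qed.

Lemma lipdiam_ge (S : set (M -> R)) (F G : M -> R) (u v : M) (r : R) :
  S F -> S G -> u <> v -> r * d u v <= (F v - G v) - (F u - G u) ->
  (r%:E <= lipdiam d S)%E.
Proof.
move=> SF SG uv gap; apply: (@le_trans _ _ (lipnorm d (fun z => F z - G z))).
  have vu : v <> u by move=> /esym.
  apply: (le_trans _ (lipnorm_ge _ vu)); rewrite lee_fin ler_pdivlMr ?dist_gt0 // distC.
  exact: le_trans gap (ler_norm _).
by apply: ereal_sup_ubound; exists F, G.
Qed.

Lemma eval_combL (c : seq (R * M)) (a b : R) (f g : M -> R) :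
  eval_comb c (fun z => a * f z + b * g z) = a * eval_comb c f + b * eval_comb c g.
Proof. by rewrite /eval_comb !mulr_sumr -big_split /=; apply: eq_bigr => p _; ring. Qed.

Lemma eval_combN (c : seq (R * M)) (f : M -> R) :
  eval_comb c (fun z => - f z) = - eval_comb c f.
Proof. by rewrite /eval_comb -sumrN; apply: eq_bigr => p _; rewrite mulrN. Qed.

Lemma eval_comb_in_free c : in_free d x0 (eval_comb c).
Proof.
split=> [a f g _ _ | e e_gt0].
  have -> : (fun x => a * f x + g x) = (fun x => a * f x + 1 * g x).
    by apply/funext => x; rewrite mul1r.
  by rewrite eval_combL mul1r.
exists c; apply: ge_ereal_sup => _ [f _ <-].
by rewrite subrr normr0 lee_fin ltW.
Qed.

Definition mcshane (I : Type) (S : set I) (p : I -> M) (f : I -> R) (z : M) : R :=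
  inf [set f i + d (p i) z | i in S].

Definition whitney (I : Type) (S : set I) (p : I -> M) (f : I -> R) (z : M) : R :=
  - mcshane S p (fun i => - f i) z.

Section Extension.
Variables (I : Type) (S : set I) (p : I -> M).
Hypothesis S_neq0 : S !=set0.

Section McShane.
Variable f : I -> R.
Hypothesis f_lip1 : forall i j, S i -> S j -> f i - f j <= d (p i) (p j).

Lemma mcshane_le z i : S i -> mcshane S p f z <= f i + d (p i) z.
Proof.
move=> Si; apply: ge_inf; last by exists i.
have [i1 Si1] := S_neq0; exists (f i1 - d (p i1) z) => _ [j Sj <-].
have := f_lip1 Si1 Sj; have := dist_triangle (p i1) z (p j); rewrite (distC z); lra.
Qed.

Lemma mcshane_ge z B : (forall i, S i -> B <= f i + d (p i) z) -> B <= mcshane S p f z.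
Proof.
move=> B_le; apply: lb_le_inf; last by move=> _ [i Si <-]; exact: B_le.
by have [i1 Si1] := S_neq0; exists (f i1 + d (p i1) z), i1.
Qed.

Lemma mcshane_eq i : S i -> mcshane S p f (p i) = f i.
Proof.
move=> Si; apply/le_anti/andP; split; first by rewrite -[leRHS]addr0 -(dist_xx (p i)) mcshane_le.
by apply: mcshane_ge => j Sj; have := f_lip1 Si Sj; rewrite (distC (p j)); lra.
Qed.

Lemma mcshane_lip1 : lip1 (mcshane S p f).
Proof.
move=> z w; suff : mcshane S p f z - d z w <= mcshane S p f w by lra.
apply: mcshane_ge => i Si.
have := mcshane_le z Si; have := dist_triangle (p i) w z; rewrite (distC w z); lra.
Qed.

End McShane.

Section Whitney.
Variable f : I -> R.
Hypothesis f_lip1 : forall i j, S i -> S j -> f i - f j <= d (p i) (p j).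

Let fN_lip1 i j : S i -> S j -> - f i - - f j <= d (p i) (p j).
Proof. by move=> Si Sj; rewrite opprK addrC distC; exact: f_lip1. Qed.

Lemma whitney_le z B : (forall i, S i -> f i - d (p i) z <= B) -> whitney S p f z <= B.
Proof. by move=> le_B; rewrite /whitney lerNl; apply: mcshane_ge => i /le_B; lra. Qed.

Lemma whitney_eq i : S i -> whitney S p f (p i) = f i.
Proof. by move=> Si; rewrite /whitney (mcshane_eq fN_lip1 Si) opprK. Qed.

Lemma whitney_lip1 : lip1 (whitney S p f).
Proof. by move=> z w; have := mcshane_lip1 fN_lip1 w z; rewrite distC /whitney; lra. Qed.

End Whitney.
End Extension.

(* McShane extension from [Q], then Whitney extension from [Q] and [v]: the
   latter makes [F u] as small as the Lipschitz condition allows. *)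
Lemma lip1_extension_gap (Q : set M) (f : M -> R) (u v : M) (s : R) :
  Q !=set0 -> lip1 f -> s <= d u v ->
  (forall x y, Q x -> Q y -> f x - f y + s <= d x u + d y v) ->
  exists F, [/\ lip1 F, forall x, Q x -> F x = f x & F u + s <= F v].
Proof.
move=> Q_neq0 f_lip1 s_le gap.
have fQ : forall x y, Q x -> Q y -> f x - f y <= d x y by move=> x y _ _; exact: f_lip1.
pose F1 := mcshane Q id f.
have F1_lip1 : lip1 F1 := mcshane_lip1 (p := id) Q_neq0 fQ.
have F1Q x : Q x -> F1 x = f x by exact: (mcshane_eq (p := id) Q_neq0 fQ).
have Qv_neq0 : (Q `|` [set v]) !=set0 by exists v; right.
have F1Qv : forall x y, (Q `|` [set v]) x -> (Q `|` [set v]) y -> F1 x - F1 y <= d x y.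
  by move=> x y _ _; exact: F1_lip1.
exists (whitney (Q `|` [set v]) id F1); split.
- exact: (whitney_lip1 (p := id) Qv_neq0 F1Qv).
- by move=> x Qx; rewrite (whitney_eq (p := id) Qv_neq0 F1Qv (or_introl Qx)) F1Q.
rewrite (whitney_eq (p := id) Qv_neq0 F1Qv (or_intror erefl)) -lerBrDr.
apply: (whitney_le (p := id) Qv_neq0) => x [Qx|-> /=]; last by rewrite distC; lra.
rewrite F1Q //; suff : f x - d x u + s <= F1 v by lra.
by apply: (mcshane_ge (p := id) Q_neq0) => y Qy /=; have := gap x y Qx Qy; lra.
Qed.

Lemma lip1_extension_opposite (Q : set M) (f g : M -> R) (u v : M) (s : R) :
  Q !=set0 -> lip1 f -> lip1 g -> s <= d u v ->
  (forall x y, Q x -> Q y -> Num.max (f x - f y) (g y - g x) + s <= d x u + d y v) ->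
  exists F G, [/\ lip1 F, lip1 G, forall x, Q x -> F x = f x /\ G x = g x
    & 2 * s <= (F v - G v) - (F u - G u)].
Proof.
move=> Q_neq0 f_lip1 g_lip1 s_le gap.
have [F [F_lip1 FQ Fuv]] : exists F, [/\ lip1 F, forall x, Q x -> F x = f x & F u + s <= F v].
  apply: lip1_extension_gap Q_neq0 f_lip1 s_le _ => x y Qx Qy.
  by apply: (le_trans _ (gap x y Qx Qy)); rewrite lerD2r le_max lexx.
have [G [G_lip1 GQ Gvu]] : exists G, [/\ lip1 G, forall x, Q x -> G x = g x & G v + s <= G u].
  apply: lip1_extension_gap Q_neq0 g_lip1 _ _ => [|x y Qx Qy]; first by rewrite distC.
  rewrite [d x v + _]addrC; apply: (le_trans _ (gap y x Qy Qx)).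
  by rewrite lerD2r le_max lexx orbT.
exists F, G; split=> // [x Qx|]; first by rewrite FQ ?GQ.
lra.
Qed.

Definition chain_end (a : M) (c : seq (M * M)) : M := if c is p :: _ then p.2 else a.

(* The walk starts at [a] and visits the pairs of [c] from the last one to the
   first; each pair (x, y) costs d(previous end, x) - d(x, y). *)
Fixpoint chain_cost (a : M) (c : seq (M * M)) : R :=
  if c is p :: c' then chain_cost a c' + d (chain_end a c') p.1 - d p.1 p.2 else 0.

Lemma chain_cost_cycle a p c y0 :
  chain_cost a (p :: c) + \sum_(q <- p :: c) d q.1 q.2 =
  d a (last p c).1 + \sum_(q <- zip (map fst (p :: c)) (rcons (map snd c) y0)) d q.1 q.2
  - d (last p c).1 y0.
Proof.
elim: c p => [|q c IH] p; first by rewrite /= !big_cons !big_nil /=; ring.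
have -> : zip (map fst [:: p, q & c]) (rcons (map snd (q :: c)) y0) =
   (p.1, q.2) :: zip (map fst (q :: c)) (rcons (map snd c) y0) by [].
have := IH q; rewrite /= !big_cons /= (distC q.2 p.1); lra.
Qed.

Lemma chain_cost_lb A a c z : cyc_monotonic d A -> seq_in A c ->
  - d a z <= chain_cost a c + d (chain_end a c) z.
Proof.
case: c => [|p c] A_cm cA; first by rewrite /= add0r; have := dist_ge0 a z; lra.
have := A_cm _ cA; rewrite [map snd _]/= rot1_cons.
have := chain_cost_cycle a p c p.2.
have := dist_triangle (last p c).1 z p.2; have := dist_triangle (last p c).1 a z.
rewrite /= (distC z p.2) (distC _ a); lra.
Qed.

Definition rockafellar (A : set (M * M)) (a z : M) : R :=
  inf [set chain_cost a c + d (chain_end a c) z | c in seq_in A].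

Section Rockafellar.
Variables (A : set (M * M)) (a : M).
Hypothesis A_cm : cyc_monotonic d A.

Lemma rockafellar_le z c : seq_in A c ->
  rockafellar A a z <= chain_cost a c + d (chain_end a c) z.
Proof.
move=> cA; apply: ge_inf; last by exists c.
by exists (- d a z) => _ [c' c'A <-]; exact: chain_cost_lb A_cm c'A.
Qed.

Lemma rockafellar_ge z B :
  (forall c, seq_in A c -> B <= chain_cost a c + d (chain_end a c) z) ->
  B <= rockafellar A a z.
Proof.
move=> B_le; apply: lb_le_inf; last by move=> _ [c cA <-]; exact: B_le.
have nilA : seq_in A [::] by move=> q [].
by exists (chain_cost a [::] + d (chain_end a [::]) z), [::].
Qed.

Lemma rockafellar_lip1 : lip1 (rockafellar A a).
Proof.
move=> z w; suff : rockafellar A a z - d z w <= rockafellar A a w by lra.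
apply: rockafellar_ge => c cA; have := rockafellar_le z cA.
have := dist_triangle (chain_end a c) w z; rewrite (distC w z); lra.
Qed.

Lemma rockafellar_tight x y : A (x, y) -> rockafellar A a y + d x y <= rockafellar A a x.
Proof.
move=> Axy; apply: rockafellar_ge => c cA.
have xycA : seq_in A ((x, y) :: c) by move=> q [<-|qc] //; exact: cA.
by have := rockafellar_le y xycA; rewrite /= dist_xx; lra.
Qed.

End Rockafellar.

Lemma cyc_monotonicP (A : set (M * M)) : cyc_monotonic d A <->
  exists f, lip1 f /\ forall x y, A (x, y) -> f x - f y = d x y.
Proof.
split=> [A_cm | [f [f_lip1 f_tight]] s sA].
  exists (rockafellar A x0); split; first exact: rockafellar_lip1.
  move=> x y Axy; apply/le_anti/andP; split; first exact: rockafellar_lip1.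
  by have := rockafellar_tight x0 A_cm Axy; lra.
have -> : \sum_(p <- s) d p.1 p.2 =
    \sum_(p <- zip (map fst s) (rot 1 (map snd s))) (f p.1 - f p.2).
  rewrite sumr_zip_sub ?size_rot ?size_map // sumr_rot !big_map -sumrB.
  by apply: eq_big_In => -[x y] /sA /f_tight /= ->.
by apply: ler_sum => p _; exact: f_lip1.
Qed.

Definition avg_mol (s : seq (M * M)) : seq (R * M) :=
  [seq ((size s)%:R^-1 / d p.1 p.2, p.1) | p <- s] ++
  [seq (- ((size s)%:R^-1 / d p.1 p.2), p.2) | p <- s].

Section Necessity.
Variable s : seq {classic (M * M)}.

Lemma eval_avg_mol f :
  eval_comb (avg_mol s) f = (size s)%:R^-1 * \sum_(p <- s) mol d f p.1 p.2.
Proof.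
rewrite /eval_comb big_cat /= !big_map -big_split /= mulr_sumr.
by apply: eq_bigr => p _; rewrite /mol; ring.
Qed.

Hypothesis s_irr : forall p, p \in s -> p.1 <> p.2.

Lemma dualnorm_avg_mol : s != [::] ->
  (exists f, lipball d x0 f /\ forall p, p \in s -> mol d f p.1 p.2 = 1) ->
  dualnorm d x0 (eval_comb (avg_mol s)) = 1%:E.
Proof.
move=> s_neq0 [f0 [f0_ball f0_mol]].
have n_gt0 : 0 < (size s)%:R :> R by rewrite ltr0n lt0n size_eq0.
apply/le_anti/andP; split.
  apply: ge_ereal_sup => _ [f f_ball <-]; rewrite lee_fin eval_avg_mol normrM.
  rewrite gtr0_norm ?invr_gt0 // mulrC ler_pdivrMr // mul1r.
  apply: le_trans (ler_norm_sum _ _ _) _; rewrite -(@sumr1_size _ _ s) !big_seq.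
  apply: ler_sum => p ps; have d_gt0 := dist_gt0 (s_irr ps).
  rewrite /mol normrM normfV (gtr0_norm d_gt0) ler_pdivrMr // mul1r.
  exact: lip1_norm (lipball_lip1 f_ball) _ _.
apply: le_trans (dualnorm_ge _ f0_ball); rewrite eval_avg_mol.
rewrite (eq_big_seq (fun=> 1)) => [|p /f0_mol //].
by rewrite sumr1_size mulVf ?normr1 ?gt_eqF.
Qed.

Lemma wslice_avg_mol (alpha : R) (H : M -> R) p :
  wslice d x0 (eval_comb (avg_mol s)) alpha H -> p \in s ->
  1 - (size s)%:R * alpha <= mol d H p.1 p.2.
Proof.
move=> [H_ball H_big] ps.
have n_gt0 : 0 < (size s)%:R :> R.
  by rewrite ltr0n lt0n size_eq0; apply/eqP => s0; rewrite s0 in ps.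
have le0 q : q \in s -> mol d H q.1 q.2 - 1 <= 0.
  by move=> qs; rewrite subr_le0 (mol_le1 H_ball (s_irr qs)).
have := sumr_le_mem ps le0; rewrite sumrB sumr1_size.
move: H_big; rewrite eval_avg_mol mulrC ltr_pdivlMr //; nra.
Qed.

End Necessity.

Lemma lip1_gap_max_le (F G : M -> R) (u v : M) (alpha eps : R) :
  lip1 F -> lip1 G -> alpha <= eps ->
  (2 - alpha) * d u v < (F v - G v) - (F u - G u) ->
  forall x y, Num.max (F x - F y) (G y - G x) + (1 - eps) * d u v <= d x u + d y v.
Proof.
move=> F_lip1 G_lip1 alpha_eps gap x y.
have := F_lip1 x u; have := F_lip1 v y; have := G_lip1 y v; have := G_lip1 u x.
have := F_lip1 v u; have := G_lip1 u v; rewrite (distC v y) (distC u x) (distC v u).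
have : alpha * d u v <= eps * d u v by rewrite ler_wpM2r ?dist_ge0.
move=> *; rewrite -lerBrDr ge_max; apply/andP; split; lra.
Qed.

Lemma wLD2P_two_LipLTP : (exists x y : M, x <> y) -> wLD2P d x0 -> two_LipLTP d x0.
Proof.
move=> [u0 [v0 uv0]] LD2P A A_fin A_irr A_cm eps eps_gt0.
have [s As] := (@finite_seqP {classic (M * M)} A).1 A_fin; subst A.
have s_irr p : p \in s -> p.1 <> p.2 by case: p => x y; exact: A_irr.
have [s0|s_neq0] := eqVneq s [::].
  exists (fun=> 0), (fun=> 0); split; first exact: lipball0.
  split; first exact: lipball0.
  by exists u0, v0; split=> //; rewrite s0; split=> [x y|x y [z []]].
have n_gt0 : 0 < (size s)%:R :> R by rewrite ltr0n lt0n size_eq0.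
have [f0 [f0_lip1 f0_tight]] := (cyc_monotonicP _).1 A_cm.
have mu1 : dualnorm d x0 (eval_comb (avg_mol s)) = 1%:E.
  apply: (dualnorm_avg_mol s_irr s_neq0); exists (fun z => f0 z - f0 x0).
  split=> [|[x y] xys]; first exact: lip1_lipball_shift.
  by rewrite mol_shift /mol f0_tight ?divff ?gt_eqF ?dist_gt0 //; exact: s_irr xys.
pose alpha := eps / (size s)%:R.
have alpha_gt0 : 0 < alpha by exact: divr_gt0.
have alpha_le : alpha <= eps.
  by rewrite ler_pdivrMr //; apply: ler_peMr; [exact: ltW | rewrite ler1n lt0n size_eq0].
have [F [G [u [v [F_sl G_sl uv gap]]]]] :
    exists F G u v, [/\ wslice d x0 (eval_comb (avg_mol s)) alpha F,
      wslice d x0 (eval_comb (avg_mol s)) alpha G, u <> v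
      & (2 - alpha) * d u v < (F v - G v) - (F u - G u)].
  by apply: lipdiam_gt; rewrite (LD2P _ (eval_comb_in_free _) mu1 _ alpha_gt0) lte_fin; lra.
exists F, G; split; first exact: F_sl.1.
split; first exact: G_sl.1.
exists u, v; split=> //; split=> [x y xys | x y _ _].
  have := wslice_avg_mol s_irr F_sl xys; have := wslice_avg_mol s_irr G_sl xys.
  by rewrite /alpha mulrC divfK ?gt_eqF.
exact: lip1_gap_max_le (lipball_lip1 F_sl.1) (lipball_lip1 G_sl.1) alpha_le gap x y.
Qed.

Section FiniteCombination.
Variable c : seq (R * M).

(* Node [0] is the base point, with weight [0]: it pins the maximiser below to
   vanish at [x0]. *)
Definition node (i : 'I_(size c).+1) : M := nth x0 (x0 :: map snd c) i.
Definition weight (i : 'I_(size c).+1) : R := nth 0 (0 :: map fst c) i.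

Lemma eval_comb_nodes f : eval_comb c f = \sum_i weight i * f (node i).
Proof.
rewrite big_ord_recl /= mul0r add0r /eval_comb (big_nth (0, x0)) big_mkord.
by apply: eq_bigr => i _; rewrite /weight /node /= add0n !(nth_map (0, x0)).
Qed.

Definition lip1_on_nodes (H : M -> R) :=
  forall i j, H (node i) - H (node j) <= d (node i) (node j).

Lemma eval_comb_max : exists K, [/\ lip1 K, K x0 = 0 &
  forall H, H x0 = 0 -> lip1_on_nodes H -> eval_comb c H <= eval_comb c K].
Proof.
have [k [k0 k_lip1 k_max]] := lip_polytope_max weight (fun i j => dist_ge0 (node i) (node j)).
have T_neq0 : [set: 'I_(size c).+1] !=set0 by exists ord0.
have k_lip1' i j : setT i -> setT j -> k i - k j <= d (node i) (node j) by move=> _ _.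
have K_node i : mcshane setT node k (node i) = k i.
  exact: (mcshane_eq T_neq0 k_lip1' (i := i) I).
exists (mcshane setT node k); split; first exact: (mcshane_lip1 T_neq0 k_lip1').
  exact: etrans (K_node ord0) k0.
move=> H H0 H_lip1; rewrite !eval_comb_nodes.
have -> : \sum_i weight i * mcshane setT node k (node i) = \sum_i weight i * k i.
  by apply: eq_bigr => i _; rewrite K_node.
exact: (k_max (fun i => H (node i))).
Qed.

Section Maximiser.
Variable K : M -> R.
Hypotheses (K_lip1 : lip1 K) (K_x0 : K x0 = 0).
Hypothesis K_max : forall H, H x0 = 0 -> lip1_on_nodes H -> eval_comb c H <= eval_comb c K.

Definition tight_pairs : set (M * M) := [set q | exists i j, [/\ q = (node i, node j),
  node i <> node j & K (node i) - K (node j) = d (node i) (node j)]].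

Lemma tight_pairs_finite : finite_set tight_pairs.
Proof.
pose nodes2 := [set: 'I_(size c).+1 * 'I_(size c).+1].
apply: (@sub_finite_set _ _ ((fun ij => (node ij.1, node ij.2)) @` nodes2)).
  by move=> _ [i [j [-> _]]]; exists (i, j).
exact/finite_image/finite_finset.
Qed.

Lemma tight_pairs_neq x y : tight_pairs (x, y) -> x <> y.
Proof. by move=> [i [j [[-> ->]]]]. Qed.

Lemma tight_pairs_cyc_monotonic : cyc_monotonic d tight_pairs.
Proof. by apply/cyc_monotonicP; exists K; split=> // x y [i [j [[-> ->]]]]. Qed.

Lemma eval_comb_near_tight (e : R) (F : M -> R) : 0 <= e -> lipball d x0 F ->
  (forall x y, tight_pairs (x, y) -> 1 - e <= mol d F x y) ->
  (1 - e) * eval_comb c K <= eval_comb c F.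
Proof.
move=> e_ge0 F_ball F_mol; have F_lip1 := lipball_lip1 F_ball.
pose D (ij : 'I_(size c).+1 * 'I_(size c).+1) := d (node ij.1) (node ij.2).
pose X (ij : 'I_(size c).+1 * 'I_(size c).+1) := K (node ij.1) - K (node ij.2).
have [t [t_gt0 t_small]] :
    exists t, 0 < t /\ forall ij, X ij < D ij -> t <= (D ij - X ij) / (2 * D ij + 1).
  apply: exists_pos_lbound => ij XD; have := dist_ge0 (node ij.1) (node ij.2).
  by rewrite /D /X in XD * => D_ge0; apply: divr_gt0; lra.
have tilt i j : (1 + t) * (K (node i) - K (node j)) - t * (F (node i) - F (node j))
    <= (1 + t * e) * d (node i) (node j).
  have D_ge0 := dist_ge0 (node i) (node j).
  apply: tilt_le => //; first by rewrite lerNl opprB distC.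
  have [XD|XD] := lerP (d (node i) (node j)) (K (node i) - K (node j)); [left | right].
    have XD' : K (node i) - K (node j) = d (node i) (node j).
      by apply/le_anti; rewrite XD K_lip1.
    split=> //; have [ij|ij] := pselect (node i = node j).
      by rewrite ij !subrr dist_xx mulr0.
    rewrite -ler_pdivlMr ?dist_gt0 //; apply: F_mol.
    by exists i, j.
  by rewrite -ler_pdivlMr; [exact: (t_small (i, j)) | lra].
have q_gt0 : 0 < 1 + t * e by have := mulr_ge0 (ltW t_gt0) e_ge0; lra.
pose a := (1 + t) / (1 + t * e); pose b := - (t / (1 + t * e)).
have H_lip1 : lip1_on_nodes (fun z => a * K z + b * F z).
  move=> i j; rewrite -(ler_pM2l q_gt0).
  have -> : (1 + t * e) * (a * K (node i) + b * F (node i) - (a * K (node j) + b * F (node j)))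
    = (1 + t) * (K (node i) - K (node j)) - t * (F (node i) - F (node j)).
    by rewrite /a /b; field; exact: lt0r_neq0.
  exact: tilt.
have H0 : a * K x0 + b * F x0 = 0 by rewrite K_x0 F_ball.1.1 !mulr0 addr0.
have := K_max (H := fun z => a * K z + b * F z) H0 H_lip1.
rewrite eval_combL -(ler_pM2l q_gt0).
have -> : (1 + t * e) * (a * eval_comb c K + b * eval_comb c F) =
    (1 + t) * eval_comb c K - t * eval_comb c F.
  by rewrite /a /b; field; exact: lt0r_neq0.
nra.
Qed.

Lemma tight_pairs_neq0 : 0 < eval_comb c K -> tight_pairs !=set0.
Proof.
move=> cK_gt0; apply/set0P/eqP => A0.
have vac x y : tight_pairs (x, y) -> 1 - 0 <= mol d (fun=> 0) x y by rewrite A0.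
have := eval_comb_near_tight (lexx 0) lipball0 vac.
have -> : eval_comb c (fun=> 0) = 0 by rewrite /eval_comb big1 // => p _; rewrite mulr0.
lra.
Qed.

End Maximiser.
End FiniteCombination.

Lemma approx_norming (phi : (M -> R) -> R) (c : seq (R * M)) (e : R) : 0 < e ->
  dualnorm d x0 phi = 1%:E ->
  (forall f, lipball d x0 f -> `|phi f - eval_comb c f| <= e) ->
  exists2 f, lipball d x0 f & 1 - 2 * e < eval_comb c f.
Proof.
move=> e_gt0 phi1 approx.
have : ((1 - e)%:E < dualnorm d x0 phi)%E by rewrite phi1 lte_fin; lra.
move=> /ereal_sup_gt[_ [f f_ball <-]]; rewrite lte_fin => phi_f.
have cf_big : 1 - 2 * e < `|eval_comb c f|.
  have := approx f f_ball; have := ler_normD (phi f - eval_comb c f) (eval_comb c f).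
  rewrite subrK; lra.
have [cf_ge0|cf_lt0] := lerP 0 (eval_comb c f).
  by exists f => //; rewrite ger0_norm in cf_big.
exists (fun x => - f x); first exact: lipballN.
by rewrite eval_combN; rewrite ltr0_norm in cf_big.
Qed.

Lemma wslice_near_comb (phi : (M -> R) -> R) c (e alpha N : R) (H : M -> R) :
  2 * e < 1 -> 4 * e < alpha -> 1 - 2 * e < N ->
  `|phi H - eval_comb c H| <= e -> lipball d x0 H -> (1 - e) * N <= eval_comb c H ->
  wslice d x0 phi alpha H.
Proof.
move=> e_lt e_alpha N_big approx H_ball H_big; split=> //.
have : (1 - e) * (1 - 2 * e) <= (1 - e) * N by rewrite ler_pM2l; lra.
move: approx; rewrite ler_norml => /andP[approx _]; nra.
Qed.

Lemma two_LipLTP_lipdiam (phi : (M -> R) -> R) (alpha e : R) :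
  two_LipLTP d x0 -> in_free d x0 phi -> dualnorm d x0 phi = 1%:E ->
  0 < e -> 2 * e < 1 -> 4 * e < alpha ->
  ((2 - 2 * e)%:E <= lipdiam d (wslice d x0 phi alpha))%E.
Proof.
move=> LTP phi_free phi1 e_gt0 e_lt e_alpha.
have [c phi_c] := phi_free.2 e e_gt0.
have approx f : lipball d x0 f -> `|phi f - eval_comb c f| <= e.
  move=> f_ball; rewrite -lee_fin; apply: le_trans phi_c.
  exact: (dualnorm_ge (fun g => phi g - eval_comb c g) f_ball).
have [f2 f2_ball f2_big] := approx_norming e_gt0 phi1 approx.
have [K [K_lip1 K_x0 K_max]] := eval_comb_max c.
have K_big : 1 - 2 * e < eval_comb c K.
  by apply: lt_le_trans f2_big (K_max _ f2_ball.1.1 _) => i j; exact: (lipball_lip1 f2_ball).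
have [[a b] Aab] : tight_pairs c K !=set0.
  by apply: tight_pairs_neq0 K_lip1 K_x0 K_max _; lra.
pose A := tight_pairs c K.
have [f [g [f_ball [g_ball [u [v [uv [fg_mol fg_gap]]]]]]]] :=
  LTP A (tight_pairs_finite c K) (@tight_pairs_neq c K) (tight_pairs_cyc_monotonic K_lip1)
    e e_gt0.
have Q_neq0 : proj_pairs A !=set0 by exists a, b; left.
have s_le : (1 - e) * d u v <= d u v by have := dist_ge0 u v; nra.
have [F [G [F_lip1 G_lip1 FGQ FG_gap]]] := lip1_extension_opposite Q_neq0
  (lipball_lip1 f_ball) (lipball_lip1 g_ball) s_le fg_gap.
have in_slice (h H : M -> R) : lip1 H -> (forall x, proj_pairs A x -> H x = h x) ->
    (forall x y, A (x, y) -> 1 - e <= mol d h x y) ->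
    wslice d x0 phi alpha (fun z => H z - H x0).
  move=> H_lip1 HQ h_mol; have H_ball := lip1_lipball_shift H_lip1.
  apply: (wslice_near_comb e_lt e_alpha K_big (approx _ H_ball) H_ball).
  apply: (eval_comb_near_tight K_lip1 K_x0 K_max (ltW e_gt0) H_ball) => x y Axy.
  rewrite mol_shift /mol (HQ x) ?(HQ y); first exact: h_mol.
    by exists x; right.
  by exists y; left.
have F_slice := in_slice _ _ F_lip1 (fun x Qx => (FGQ x Qx).1)
  (fun x y Axy => (fg_mol x y Axy).1).
have G_slice := in_slice _ _ G_lip1 (fun x Qx => (FGQ x Qx).2)
  (fun x y Axy => (fg_mol x y Axy).2).
apply: (lipdiam_ge F_slice G_slice uv).
have -> : F v - F x0 - (G v - G x0) - (F u - F x0 - (G u - G x0)) = F v - G v - (F u - G u).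
  by ring.
by have -> : (2 - 2 * e) * d u v = 2 * ((1 - e) * d u v) by ring.
Qed.

Lemma two_LipLTP_wLD2P : two_LipLTP d x0 -> wLD2P d x0.
Proof.
move=> LTP phi phi_free phi1 alpha alpha_gt0.
apply/le_anti/andP; split; first by apply: lipdiam_le2 => f [].
apply/lee_addgt0Pr => eps eps_gt0.
pose e := Num.min (eps / 2) (Num.min (alpha / 8) (1 / 4)).
have e_gt0 : 0 < e by rewrite !lt_min !divr_gt0.
have [e_eps e_alpha e_1] : [/\ e <= eps / 2, e <= alpha / 8 & e <= 1 / 4].
  by split; rewrite !ge_min ?lexx ?orbT.
have e_lt : 2 * e < 1 by lra.
have e_alpha' : 4 * e < alpha by lra.
have := two_LipLTP_lipdiam LTP phi_free phi1 e_gt0 e_lt e_alpha'.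
have -> : 2%:E = ((2 - 2 * e)%:E + (2 * e)%:E)%E by rewrite -EFinD subrK.
by move=> le_diam; apply: leeD le_diam _; rewrite lee_fin; lra.
Qed.

End LipschitzFree.

Unset Implicit Arguments.
Local Close Scope classical_set_scope.

Theorem proposition4p5 (R : realType) (M : Type) (d : M -> M -> R) (x0 : M)
  (hd : is_metric d) (hM : exists x y : M, x <> y) :
  wLD2P d x0 <-> two_LipLTP d x0.
Proof. by split; [exact: wLD2P_two_LipLTP hd hM | exact: two_LipLTP_wLD2P hd]. Qed.
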